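(* Let $P$ be a Poisson tensor on $\mathbb{R}^3$, let $H\in C^\infty(\mathbb{R}^3)$, let $S\in C^\infty(\mathbb{R}^3)$ satisfy $PdS=0$, and let $g$ be the symmetric tensor with components $g^{ij}=H^iH^j-\delta^{ij}\sum_k H^kH^k$. Define the vector fields $\xi_P=PdH$ and $\xi=PdH+gdS$. Then at every regular point $x$ of $P$ (i.e. every $x$ with $P(x)\neq 0$), $\xi_P(x)=0$ if and only if $\xi(x)=0$.
   Context: $\mathbb{R}^3$ carries the standard Euclidean metric, used to identify tangent and cotangent spaces with $\mathbb{R}^3$; $H^i=H_i=\partial H/\partial x^i$ in standard coordinates. A Poisson tensor is a skew-symmetric bivector field satisfying the Jacobi identity; a point $x$ is regular for $P$ if the rank of $P$ at $x$ is maximal, which in $\mathbb{R}^3$ means $P(x)\neq 0$. *)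

From HB Require Import structures.
From mathcomp Require Import all_boot all_order all_algebra.
From mathcomp Require Import all_classical all_reals all_analysis.
Set Implicit Arguments. Unset Strict Implicit. Unset Printing Implicit Defensive.
Import Order.TTheory GRing.Theory Num.Theory.
Import numFieldNormedType.Exports.
Local Open Scope ring_scope.

Section Defs.
Variable R : realType.
Notation pt := 'rV[R]_3.

Definition e3 (i : 'I_3) : pt := delta_mx 0 i.

Definition partial (i : 'I_3) (f : pt -> R) : pt -> R :=
  fun x => 'D_(e3 i) f x.

Fixpoint iter_partial (l : seq 'I_3) (f : pt -> R) : pt -> R :=
  match l with
  | [::] => f
  | i :: l' => partial i (iter_partial l' f)
  end.

Definition smooth (f : pt -> R) : Prop :=
  forall l : seq 'I_3,
    continuous (iter_partial l f) /\
    forall (i : 'I_3) (x : pt), derivable (iter_partial l f) x (e3 i).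

Definition poisson_tensor (P : 'I_3 -> 'I_3 -> pt -> R) : Prop :=
  (forall i j, smooth (P i j)) /\
  (forall i j x, P i j x = - P j i x) /\
  (forall i j k x,
     \sum_(l < 3) (P i l x * partial l (P j k) x
                  + P j l x * partial l (P k i) x
                  + P k l x * partial l (P i j) x) = 0).

Definition bivec_d (P : 'I_3 -> 'I_3 -> pt -> R) (F : pt -> R) (x : pt) : 'rV[R]_3 :=
  \row_(i < 3) \sum_(j < 3) P i j x * partial j F x.

Definition gH (H : pt -> R) (i j : 'I_3) (x : pt) : R :=
  partial i H x * partial j H x
  - (i == j)%:R * \sum_(k < 3) partial k H x * partial k H x.

Definition regular_point (P : 'I_3 -> 'I_3 -> pt -> R) (x : pt) : Prop :=
  exists i j, P i j x <> 0.

End Defs.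

(* At a point x put M := P(x), h := dH(x), s := dS(x); then s M = 0 and
   g dS = (h.s) h - (h.h) s. Skewness of M alone makes xi_P = h M orthogonal
   to g dS, because h.(h M) = 0 and s.(h M) = -(s M).h = 0; so xi = 0 forces
   |xi_P|^2 = 0. Conversely a nonzero skew 3x3 matrix has as kernel the line
   spanned by its axial vector p (M^2 = p^T p - (p.p) I), so xi_P = 0 makes h
   and s collinear, and then g dS = 0. *)

From HB Require Import structures.
From mathcomp Require Import all_boot all_order all_algebra.
From mathcomp Require Import all_classical all_reals all_analysis.
From mathcomp Require Import ring.
Set Implicit Arguments. Unset Strict Implicit. Unset Printing Implicit Defensive.
Import Order.TTheory GRing.Theory Num.Theory.
Import numFieldNormedType.Exports.
Local Open Scope ring_scope.

Section DotProduct.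
Variables (R : comPzRingType) (n : nat).
Implicit Types (u v w : 'rV[R]_n) (M : 'M[R]_n).

Definition dotmul u v : R := (u *m v^T) 0 0.

Lemma dotmulE u v : dotmul u v = \sum_j u 0 j * v 0 j.
Proof. by rewrite /dotmul mxE; apply: eq_bigr => j _; rewrite mxE. Qed.

Lemma dotmulC u v : dotmul u v = dotmul v u.
Proof. by rewrite /dotmul -[u *m _]trmxK trmx_mul trmxK mxE. Qed.

Lemma dotmul0v v : dotmul 0 v = 0.
Proof. by rewrite /dotmul mul0mx mxE. Qed.

Lemma dotmulBr u v w : dotmul u (v - w) = dotmul u v - dotmul u w.
Proof. by rewrite /dotmul linearB mulmxBr !mxE. Qed.

Lemma dotmulvN u v : dotmul u (- v) = - dotmul u v.
Proof. by rewrite -sub0r dotmulBr dotmulC dotmul0v sub0r. Qed.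

Lemma dotmulNv u v : dotmul (- u) v = - dotmul u v.
Proof. by rewrite dotmulC dotmulvN dotmulC. Qed.

Lemma dotmulvZ a u v : dotmul u (a *: v) = a * dotmul u v.
Proof. by rewrite /dotmul linearZ -scalemxAr !mxE. Qed.

Lemma dotmulZv a u v : dotmul (a *: u) v = a * dotmul u v.
Proof. by rewrite dotmulC dotmulvZ dotmulC. Qed.

Lemma dotmul_mulmxr u v M : dotmul u (v *m M) = dotmul (u *m M^T) v.
Proof. by rewrite /dotmul trmx_mul mulmxA. Qed.

Definition gmul u v : 'rV[R]_n := dotmul u v *: u - dotmul u u *: v.

End DotProduct.

Lemma dotmulvv_eq0 (R : realDomainType) (n : nat) (v : 'rV[R]_n) :
  (dotmul v v == 0) = (v == 0).
Proof.
apply/idP/eqP => [/eqP vv0|->]; last by rewrite dotmul0v.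
apply/rowP => j; rewrite mxE.
have sq_ge0 i : true -> 0 <= v 0 i * v 0 i by rewrite -expr2 sqr_ge0.
by move: vv0; rewrite dotmulE => /(psumr_eq0P sq_ge0)/(_ j isT)/eqP;
  rewrite mulf_eq0 orbb => /eqP.
Qed.

Section Skew.
Variables (R : numDomainType) (n : nat) (M : 'M[R]_n).
Hypothesis skewM : M^T = - M.

Lemma skew_mxE i j : M j i = - M i j.
Proof. by move/matrixP/(_ i j): skewM; rewrite !mxE. Qed.

Lemma skew_mx_diag i : M i i = 0.
Proof. by apply/eqP; rewrite -eqNr -skew_mxE. Qed.

Lemma dotmul_skew_self v : dotmul (v *m M) v = 0.
Proof.
apply/eqP; rewrite -eqNr; apply/eqP.
by rewrite [RHS]dotmulC dotmul_mulmxr skewM mulmxN dotmulNv.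
Qed.

Lemma dotmul_skew_gmul h s : s *m M = 0 -> dotmul (h *m M) (gmul h s) = 0.
Proof.
move=> sM0; have hMs : dotmul (h *m M) s = 0.
  by rewrite dotmulC dotmul_mulmxr skewM mulmxN sM0 oppr0 dotmul0v.
by rewrite /gmul dotmulBr !dotmulvZ dotmul_skew_self hMs !mulr0 subr0.
Qed.

End Skew.

Lemma ord3_cases (i : 'I_3) : i = 0 \/ i = 1 \/ i = 2.
Proof.
by case: i => [[|[|[|//]]] ?]; [left | right; left | right; right]; apply: val_inj.
Qed.

Lemma sum3E (R : nmodType) (F : 'I_3 -> R) : \sum_(j < 3) F j = F 0 + F 1 + F 2.
Proof.
rewrite !big_ord_recr big_ord0 /= add0r.
by congr (F _ + F _ + F _); apply: val_inj.
Qed.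

Section Skew3.
Variables (R : realFieldType) (M : 'M[R]_3).
Hypothesis skewM : M^T = - M.

Definition axial3 : 'rV[R]_3 := \row_k [:: M 1 2; M 2 0; M 0 1]`_k.
Local Notation p := axial3.

Lemma mulmx_skew3_sqr u : u *m M *m M = dotmul u p *: p - dotmul p p *: u.
Proof.
apply/rowP => j; case: (ord3_cases j) => [|[|]] ->;
  rewrite /dotmul !(mxE, sum3E) /= !(skew_mx_diag skewM) (skew_mxE skewM 0 1)
          (skew_mxE skewM 0 2) (skew_mxE skewM 1 2); ring.
Qed.

Lemma axial3_eq0 : p = 0 -> M = 0.
Proof.
move=> /rowP p0; move: (p0 0) (p0 1) (p0 2); rewrite !mxE /= => M12 M20 M01.
apply/matrixP => i j; rewrite mxE.
case: (ord3_cases i) (ord3_cases j) => [|[|]] -> [|[|]] ->;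
  by rewrite ?(skew_mx_diag skewM) ?(skew_mxE skewM 0 1) ?(skew_mxE skewM 2 0)
             ?(skew_mxE skewM 1 2) ?M12 ?M20 ?M01 ?oppr0.
Qed.

Hypothesis M_neq0 : M != 0.

Lemma skew3_kernel_span u : u *m M = 0 -> exists a, u = a *: p.
Proof.
move=> uM0; have pp_neq0 : dotmul p p != 0.
  by rewrite dotmulvv_eq0; apply: contra M_neq0 => /eqP/axial3_eq0 ->.
exists (dotmul u p / dotmul p p); apply/(scalerI pp_neq0).
have /eqP := mulmx_skew3_sqr u; rewrite uM0 mul0mx eq_sym subr_eq0 => /eqP <-.
by rewrite scalerA mulrC divfK.
Qed.

Lemma skew3_kernel_gmul u v : u *m M = 0 -> v *m M = 0 -> gmul u v = 0.
Proof.
move=> /skew3_kernel_span[a ->] /skew3_kernel_span[b ->].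
rewrite /gmul !(dotmulZv, dotmulvZ) !scalerA; apply/eqP; rewrite subr_eq0; apply/eqP.
by congr (_ *: _); ring.
Qed.

Lemma skew3_equilibria h s :
  s *m M = 0 -> (h *m M = 0 <-> h *m M + gmul h s = 0).
Proof.
move=> sM0; split=> [hM0|/eqP]; first by rewrite (skew3_kernel_gmul hM0 sM0) hM0 addr0.
rewrite addr_eq0 => /eqP hME; apply/eqP; rewrite -dotmulvv_eq0.
by rewrite {2}hME dotmulvN (dotmul_skew_gmul skewM) ?oppr0.
Qed.

End Skew3.

Section PoissonMatrix.
Variables (R : realType) (P : 'I_3 -> 'I_3 -> 'rV[R]_3 -> R) (x : 'rV[R]_3).

Definition grad (F : 'rV[R]_3 -> R) : 'rV[R]_3 := \row_j partial j F x.

(* P(x) transposed, because points and gradients are row vectors. *)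
Definition bivec_mx : 'M[R]_3 := \matrix_(i, j) P j i x.

Lemma bivec_dE F : bivec_d P F x = grad F *m bivec_mx.
Proof. by apply/rowP => i; rewrite !mxE; apply: eq_bigr => j _; rewrite !mxE mulrC. Qed.

Lemma bivec_d_gH H S : bivec_d (gH H) S x = gmul (grad H) (grad S).
Proof.
apply/rowP => i; rewrite !mxE !dotmulE /gH.
under eq_bigr do rewrite mulrBl -mulrA.
rewrite sumrB -mulr_sumr [X in _ - X](bigD1 i) // eqxx mul1r.
rewrite [X in _ - (_ + X)]big1 => [|j ji]; last by rewrite eq_sym (negPf ji) !mul0r.
rewrite addr0 mulrC; congr (_ * _ - _ * _); apply: eq_bigr => j _; by rewrite !mxE.
Qed.
End PoissonMatrix.

Theorem mainTheorem3 (R : realType) (P : 'I_3 -> 'I_3 -> 'rV[R]_3 -> R)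
  (H S : 'rV[R]_3 -> R) :
  poisson_tensor P -> smooth H -> smooth S ->
  (forall x, bivec_d P S x = 0) ->
  forall x : 'rV[R]_3, regular_point P x ->
    (bivec_d P H x = 0 <-> bivec_d P H x + bivec_d (gH H) S x = 0).
Proof.
move=> [_ [P_skew _]] _ _ PS0 x [i [j Pij_neq0]].
have skewP : (bivec_mx P x)^T = - bivec_mx P x.
  by apply/matrixP => k l; rewrite !mxE P_skew.
have P_neq0 : bivec_mx P x != 0.
  by apply/eqP => /matrixP/(_ j i); rewrite !mxE.
rewrite bivec_dE bivec_d_gH; apply: skew3_equilibria => //.
by rewrite -bivec_dE PS0.
Qed.
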